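(* Let $t$ be an integer and let $G$ be a topologically $t$-chromatic graph with at least one edge. Then for every field $\mathbb{F}$, \[\overline{\xi}_l(G,\mathbb{F}) \geq \lceil t/2 \rceil + 1.\]
   Context: All graphs are finite, simple and undirected. For a vertex $v$, $N(v)$ is the set of neighbors of $v$, and $\{v\}\cup N(v)$ is its closed neighborhood. For $x,y\in\mathbb{F}^t$, $\langle x,y\rangle=\sum_{i=1}^t x_iy_i$ (over $\mathbb{C}$ one may use $\sum_i x_i\overline{y_i}$). An orthogonal representation of $G=(V,E)$ over $\mathbb{F}$ is an assignment of a vector $u_v\in\mathbb{F}^t$ (for some $t$) to every $v\in V$ such that $\langle u_v,u_v\rangle\neq 0$ for every $v$ and $\langle u_v,u_{v'}\rangle=0$ whenever $v,v'$ are adjacent. Its locality is $\max_{v\in V}\dim\big(\mathrm{span}\{u_{v'} : v'\in\{v\}\cup N(v)\}\big)$. The local orthogonality dimension $\overline{\xi}_l(G,\mathbb{F})$ is the minimum locality of an orthogonal representation of $G$ over $\mathbb{F}$. A graph $G$ is called topologically $t$-chromatic if $t\le \mathrm{Xind}(\mathrm{Hom}(K_2,G))+2$, where $\mathrm{Hom}(K_2,G)$ is the homomorphism complex of $K_2$ in $G$ (a free $\mathbb{Z}_2$-complex) and $\mathrm{Xind}$ denotes its cross-index (as in Simonyi–Tardif–Zsbán). *)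

From HB Require Import structures.
From mathcomp Require Import all_boot all_order all_algebra.
Set Implicit Arguments. Unset Strict Implicit. Unset Printing Implicit Defensive.
Import Order.TTheory GRing.Theory Num.Theory.
Local Open Scope ring_scope.

(* A simple graph: T a finType of vertices, e : rel T symmetric and irreflexive. *)

Section HomComplex.
Variables (T : finType) (e : rel T).

(* Cells of Hom(K_2, G): pairs (A,B) of nonempty vertex sets, complete to each other. *)
Definition hom_cell (p : {set T} * {set T}) : bool :=
  [&& p.1 != set0, p.2 != set0 & [forall a in p.1, forall b in p.2, e a b]].

Definition cell_le (p q : {set T} * {set T}) : bool :=
  (p.1 \subset q.1) && (p.2 \subset q.2).

(* The Z2-poset Q_d: elements +-1, ..., +-(d+1) (as nonzero integers),
   x <= y iff x = y or |x| < |y|; the involution is x |-> -x. *)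
Definition Q_elt (d : nat) (x : int) : bool := (x != 0) && (`|x| <= (d.+1)%:Z).
Definition Q_le (x y : int) : bool := (x == y) || (`|x| < `|y|).

Definition Z2map_to_Q (d : nat) (f : {set T} * {set T} -> int) : Prop :=
  [/\ forall p, hom_cell p -> Q_elt d (f p),
      forall p, hom_cell p -> f (p.2, p.1) = - f p &
      forall p q, hom_cell p -> hom_cell q -> cell_le p q -> Q_le (f p) (f q)].

(* Xind(Hom(K_2,G)) = min { d | there is a Z2-map to Q_d };
   G topologically t-chromatic  iff  t <= Xind(Hom(K_2,G)) + 2,
   i.e. t <= d + 2 for every d admitting such a Z2-map. *)
Definition topologically_chromatic (t : int) : Prop :=
  forall d : nat, (exists f, Z2map_to_Q d f) -> t <= d%:Z + 2.

End HomComplex.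

Section OrthRep.
Variables (T : finType) (e : rel T) (F : fieldType).

Definition dotr (k : nat) (x y : 'rV[F]_k) : F := \sum_(i < k) x 0 i * y 0 i.

Definition orth_rep (k : nat) (u : T -> 'rV[F]_k) : Prop :=
  (forall v, dotr (u v) (u v) != 0) /\
  (forall v w, e v w -> dotr (u v) (u w) = 0).

(* Matrix whose rows are u_w for w in the closed neighbourhood of v (other rows 0);
   its rank is dim span {u_w : w in {v} \cup N(v)}. *)
Definition nbhd_mx (k : nat) (u : T -> 'rV[F]_k) (v : T) : 'M[F]_(#|T|, k) :=
  \matrix_(i < #|T|)
     (if (enum_val i == v) || e v (enum_val i) then u (enum_val i) else 0).

Definition locality (k : nat) (u : T -> 'rV[F]_k) : nat :=
  (\max_(v : T) \rank (nbhd_mx u v))%N.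

End OrthRep.

(* If [u] has locality [l], a cell (A, B) of Hom(K_2, G) has two nonzero,
   mutually orthogonal spans span u(A), span u(B), each of dimension < l
   (add one vector of the other side: it lies in a closed neighbourhood and
   outside the span).  So (A, B) |-> +-(dim span u(A) + dim span u(B) - 1),
   the sign comparing canonical representatives of the two (distinct) spans,
   is an order-preserving Z2-map to Q_(2l-4); hence t <= 2l - 2. *)
From HB Require Import structures.
From mathcomp Require Import all_boot all_order all_algebra.
From mathcomp Require Import zify.
Import Order.TTheory GRing.Theory Num.Theory.
Local Open Scope ring_scope.

Set Implicit Arguments. Unset Strict Implicit.

Section Dot.
Variables (F : fieldType) (k : nat).

Lemma dotrC (x y : 'rV[F]_k) : dotr x y = dotr y x.
Proof. by apply: eq_bigr => i _; rewrite mulrC. Qed.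

Lemma dotr_mulmx_tr (x y : 'rV[F]_k) : dotr x y = (x *m y^T) 0 0.
Proof. by rewrite mxE; apply: eq_bigr => i _; rewrite !mxE. Qed.

Lemma nonisotropic_notin_orth m (x : 'rV[F]_k) (M : 'M[F]_(m, k)) :
  dotr x x != 0 -> M *m x^T = 0 -> ~~ (x <= M)%MS.
Proof.
move=> x_nz M_orth; apply/negP => /submxP [D xDM].
by move: x_nz; rewrite dotr_mulmx_tr {1}xDM -mulmxA M_orth mulmx0 mxE eqxx.
Qed.

End Dot.

Section SpanOfSets.
Variables (T : finType) (F : fieldType) (k : nat) (u : T -> 'rV[F]_k).

Definition span_set (A : {set T}) : 'M[F]_(#|T|, k) :=
  \matrix_(i < #|T|) (if enum_val i \in A then u (enum_val i) else 0).

Definition span_index (A : {set T}) : nat :=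
  find (fun S => (span_set S == span_set A)%MS) (enum {set T}).

Lemma row_sub_span_set (A : {set T}) a : a \in A -> (u a <= span_set A)%MS.
Proof.
by move=> aA; have := row_sub (enum_rank a) (span_set A); rewrite rowK enum_rankK aA.
Qed.

Lemma span_set_subP (A : {set T}) m (M : 'M[F]_(m, k)) :
  (forall a, a \in A -> (u a <= M)%MS) -> (span_set A <= M)%MS.
Proof.
by move=> AM; apply/row_subP => i; rewrite rowK; case: ifP => [/AM|_]; rewrite ?sub0mx.
Qed.

Lemma span_setS (A B : {set T}) : A \subset B -> (span_set A <= span_set B)%MS.
Proof. by move=> /subsetP AB; apply: span_set_subP => a /AB /row_sub_span_set. Qed.

Lemma span_set_orth (A : {set T}) (x : 'rV[F]_k) :
  (forall a, a \in A -> dotr (u a) x = 0) -> span_set A *m x^T = 0.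
Proof.
move=> A_orth; apply/row_matrixP => i; rewrite row_mul rowK row0.
case: ifP => [iA|_]; last by rewrite mul0mx.
by apply/matrixP => ? ?; rewrite !ord1 -dotr_mulmx_tr A_orth // mxE.
Qed.

Lemma span_indexP (A B : {set T}) :
  (span_index A == span_index B) = (span_set A == span_set B)%MS.
Proof.
have has_span C : has (fun S => (span_set S == span_set C)%MS) (enum {set T}).
  by apply/hasP; exists C; rewrite ?mem_enum ?submx_refl.
apply/eqP/idP => [AB | /eqmxP AB].
  have /eqmxP SA := nth_find set0 (has_span A).
  have /eqmxP SB := nth_find set0 (has_span B).
  rewrite -/(span_index A) -/(span_index B) AB in SA SB.
  exact/eqmxP/(eqmx_trans (eqmx_sym SA) SB).
apply: eq_find => S /=; apply/eqmxP/eqmxP => SAB.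
  exact: eqmx_trans SAB AB.
exact: eqmx_trans SAB (eqmx_sym AB).
Qed.

End SpanOfSets.

Section LocalityBounds.
Variables (T : finType) (e : rel T) (F : fieldType) (k : nat) (u : T -> 'rV[F]_k).
Hypothesis e_sym : symmetric e.
Hypothesis u_orth : orth_rep e u.

Local Notation loc := (locality e u).

Lemma row_sub_nbhd_mx v w : (w == v) || e v w -> (u w <= nbhd_mx e u v)%MS.
Proof.
by move=> vw; have := row_sub (enum_rank w) (nbhd_mx e u v); rewrite rowK enum_rankK vw.
Qed.

Lemma notin_span_of_neighbours a (B : {set T}) :
  (forall b, b \in B -> e a b) -> ~~ (u a <= span_set u B)%MS.
Proof.
case: u_orth => u_nz u_adj aB; apply: nonisotropic_notin_orth (u_nz a) _.
by apply: span_set_orth => b bB; rewrite dotrC; apply: u_adj; apply: aB.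
Qed.

Lemma rank_span_set_gt0 (A : {set T}) a : a \in A -> (0 < \rank (span_set u A))%N.
Proof.
move=> aA; rewrite lt0n mxrank_eq0; apply/negP => /eqP A0.
case: u_orth => /(_ a) + _; have := row_sub_span_set u aA.
by rewrite A0 => /submx0null ->; rewrite /dotr big1 ?eqxx // => i _; rewrite mxE mul0r.
Qed.

Lemma rank_span_set_lt_locality a (B : {set T}) :
  (forall b, b \in B -> e a b) -> (\rank (span_set u B) < loc)%N.
Proof.
move=> aB; have a_out := notin_span_of_neighbours aB.
have B_lt : (span_set u B < span_set u B + u a)%MS.
  rewrite ltmxE addsmxSl; apply: contra a_out; exact: submx_trans (addsmxSr _ _).
apply: leq_trans (rank_ltmx B_lt) (leq_trans _ (leq_bigmax a)).
apply: mxrankS; rewrite addsmx_sub row_sub_nbhd_mx ?eqxx // andbT.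
by apply: span_set_subP => b bB; apply: row_sub_nbhd_mx; rewrite aB ?orbT.
Qed.

Lemma hom_cellP (p : {set T} * {set T}) : hom_cell e p ->
  [/\ exists a, a \in p.1, exists b, b \in p.2 &
      forall a b, a \in p.1 -> b \in p.2 -> e a b].
Proof.
case/and3P => /set0Pn A_nz /set0Pn B_nz /forallP AB; split=> // a b aA bB.
by have /implyP/(_ aA)/forallP/(_ b)/implyP := AB a; apply.
Qed.

Lemma hom_cell_spans (p : {set T} * {set T}) : hom_cell e p ->
  [/\ (0 < \rank (span_set u p.1))%N, (0 < \rank (span_set u p.2))%N,
      (\rank (span_set u p.1) < loc)%N, (\rank (span_set u p.2) < loc)%N &
      span_index u p.1 != span_index u p.2].
Proof.
case/hom_cellP => -[a aA] [b bB] AB; split.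
- exact: rank_span_set_gt0 aA.
- exact: rank_span_set_gt0 bB.
- by apply: (@rank_span_set_lt_locality b) => a' a'A; rewrite e_sym AB.
- by apply: (@rank_span_set_lt_locality a) => b'; apply: AB.
rewrite span_indexP; apply: contraL (row_sub_span_set u aA) => /eqmxP ->.
by apply: notin_span_of_neighbours => b'; apply: AB.
Qed.

Lemma locality_ge2 : (exists x y, e x y) -> (2 <= loc)%N.
Proof.
case=> x [y xy].
have : hom_cell e ([set x], [set y]).
  apply/and3P; split; [exact/set0Pn/ex_intro/set11 | exact/set0Pn/ex_intro/set11 |].
  by apply/forallP => a; apply/implyP; rewrite in_set1 => /eqP ->;
    apply/forallP => b; apply/implyP; rewrite in_set1 => /eqP ->.
by case/hom_cell_spans => /=; lia.
Qed.

Definition cell_dim (p : {set T} * {set T}) : nat :=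
  (\rank (span_set u p.1) + \rank (span_set u p.2)).-1.

Definition cell_map (p : {set T} * {set T}) : int :=
  if (span_index u p.1 < span_index u p.2)%N then (cell_dim p)%:Z
  else - (cell_dim p)%:Z.

Lemma norm_cell_map p : `|cell_map p| = (cell_dim p)%:Z.
Proof. by rewrite /cell_map; case: ifP; rewrite ?normrN. Qed.

Lemma cell_map_Q p : hom_cell e p -> Q_elt (2 * loc - 4) (cell_map p).
Proof.
case/hom_cell_spans => ? ? ? ? _; rewrite /Q_elt -normr_eq0 norm_cell_map.
by rewrite lez_nat /cell_dim; apply/andP; split; [apply/eqP|]; lia.
Qed.

Lemma cell_map_swap p : hom_cell e p -> cell_map (p.2, p.1) = - cell_map p.
Proof.
case/hom_cell_spans => _ _ _ _ ne; rewrite /cell_map /cell_dim /= addnC.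
by case: ltngtP ne; rewrite ?eqxx ?opprK // => /ltnW /leq_gtF ->.
Qed.

Lemma cell_map_mono p q : hom_cell e p -> hom_cell e q -> cell_le p q ->
  Q_le (cell_map p) (cell_map q).
Proof.
case/hom_cell_spans => ? ? _ _ _ /hom_cell_spans [? ? _ _ _] /andP [pq1 pq2].
have [le1 eq1] := mxrank_leqif_eq (span_setS u pq1).
have [le2 eq2] := mxrank_leqif_eq (span_setS u pq2).
rewrite /Q_le !norm_cell_map ltz_nat /cell_dim.
have [/eqmxP E1 | ne1] := boolP (span_set u p.1 == span_set u q.1)%MS; last first.
  by rewrite (negbTE ne1) in eq1; move/eqP: eq1 => ?; apply/orP; right; lia.
have [/eqmxP E2 | ne2] := boolP (span_set u p.2 == span_set u q.2)%MS; last first.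
  by rewrite (negbTE ne2) in eq2; move/eqP: eq2 => ?; apply/orP; right; lia.
have /eqP I1 : span_index u p.1 == span_index u q.1 by rewrite span_indexP; apply/eqmxP.
have /eqP I2 : span_index u p.2 == span_index u q.2 by rewrite span_indexP; apply/eqmxP.
by rewrite /cell_map /cell_dim I1 I2 E1 E2 eqxx.
Qed.

Lemma cell_map_Z2 : Z2map_to_Q e (2 * loc - 4) cell_map.
Proof. by split; [exact: cell_map_Q | exact: cell_map_swap | exact: cell_map_mono]. Qed.

End LocalityBounds.

Lemma half_ceil_succ_le (t l : int) : t <= 2 * l - 2 -> ((t + 1) %/ 2)%Z + 1 <= l.
Proof. by have := @lez_floor (t + 1) 2 isT; lia. Qed.

Theorem mainTheorem1 (T : finType) (e : rel T)
  (e_sym : symmetric e) (e_irr : irreflexive e)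
  (has_edge : exists x y, e x y)
  (t : int) (Htop : topologically_chromatic e t) :
  forall (F : fieldType) (k : nat) (u : T -> 'rV[F]_k),
    orth_rep e u -> ((t + 1) %/ 2)%Z + 1 <= (locality e u)%:Z.
Proof.
move=> F k u u_orth; apply: half_ceil_succ_le.
have loc_ge2 := locality_ge2 e_sym u_orth has_edge.
have := Htop _ (ex_intro _ _ (cell_map_Z2 e_sym u_orth)).
lia.
Qed.
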